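(* Let $G$ be a $K_4$-minor-free graph, $xx'$ an edge of $G$, and $y,z$ distinct vertices of $G$ not in $\{x,x'\}$. Then at least one of the sets $\{x,y,z\}$ and $\{x',y,z\}$ is feasible.
   Context: $K_4$-minor-free graphs are $3$-colorable. For $n\in\mathbb{N}$, the chain of diamonds $D_n$ is the graph with vertex set $\{u_i,v_i,w_i:i\in[n]\}\cup\{u_0\}$ and edge set $\{u_{i-1}v_i,u_{i-1}w_i,v_iw_i,v_iu_i,w_iu_i: i\in[n]\}$; let $U(D_n)=\{u_0,\dots,u_n\}$. A set $X$ of distinct vertices of $G$ is connected by a chain of diamonds if there exist $n\in\mathbb{N}$ and a graph homomorphism $\varphi:D_n\to G$ with $X\subseteq\varphi(U(D_n))$. A set $X$ of three distinct vertices of $G$ is feasible if $X$ is not connected by a chain of diamonds and there is a proper $3$-coloring $\phi$ of $G$ with $|\phi(X)|\le 2$. *)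

From mathcomp Require Import all_boot.
Set Implicit Arguments. Unset Strict Implicit. Unset Printing Implicit Defensive.

Section Graphs.
Variable T : finType.
Variable e : rel T.

Definition simple_graph : Prop := symmetric e /\ irreflexive e.

Definition connected_set (B : {set T}) : Prop :=
  forall x y, x \in B -> y \in B ->
    connect (fun u v => [&& u \in B, v \in B & e u v]) x y.

Definition has_K4_minor : Prop :=
  exists B : 'I_4 -> {set T},
    (forall i, B i != set0) /\
    (forall i, connected_set (B i)) /\
    (forall i j, i != j -> [disjoint B i & B j]) /\
    (forall i j, i != j -> exists x y, [/\ x \in B i, y \in B j & e x y]).

Definition K4_minor_free : Prop := ~ has_K4_minor.

(* A homomorphism from the chain of diamonds D_n into G, given by the images
   u i (0 <= i <= n) of u_i, and v i, w i (1 <= i <= n) of v_i, w_i. *)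
Definition diamond_chain_hom (n : nat) (u v w : nat -> T) : Prop :=
  forall i, 1 <= i <= n ->
    [/\ e (u i.-1) (v i), e (u i.-1) (w i), e (v i) (w i),
        e (v i) (u i) & e (w i) (u i)].

Definition connected_by_chain_of_diamonds (X : {set T}) : Prop :=
  exists n (u v w : nat -> T), diamond_chain_hom n u v w /\
    (forall x, x \in X -> exists2 i, i <= n & u i = x).

Definition proper_coloring (k : nat) (c : T -> 'I_k) : Prop :=
  forall x y, e x y -> c x != c y.

Definition feasible (X : {set T}) : Prop :=
  [/\ #|X| = 3,
      ~ connected_by_chain_of_diamonds X &
      exists c : T -> 'I_3, proper_coloring c /\ #|c @: X| <= 2].

End Graphs.

(* A K4-minor-free graph is 3-colourable.  Contracting an edge xy that lies in
   at most one triangle keeps the graph K4-minor-free and lowers the degree sum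
   by at most 4, which gives |E| <= 2|V| - 3 by induction; such an edge exists,
   since otherwise the neighbourhood of a vertex contains a cycle, which forms a
   wheel with that vertex.  Hence some vertex has degree at most 3.  A vertex of
   degree at most 2 is deleted; a vertex of degree 3 has two non-adjacent
   neighbours (else it spans a K4 with them), which are identified through it.
   Either way a colouring of the smaller minor extends.
   Now fix a proper 3-colouring c.  In a diamond u v w u', both u and u' get the
   colour missing from {c v, c w}, so a chain of diamonds is monochromatic on
   its u-vertices and every 3-set seeing exactly two colours is feasible.  As
   c x <> c x', pigeonhole on the colours of y and z shows that {x, y, z} or
   {x', y, z} sees exactly two colours. *)

From mathcomp Require Import all_boot zify.
Set Implicit Arguments. Unset Strict Implicit. Unset Printing Implicit Defensive.

Section K4MinorFree.
Variable T : finType.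
Implicit Types (e : rel T) (B D K : {set T}).

Definition restrict e B : rel T := fun u w => [&& u \in B, w \in B & e u w].

Lemma restrict_sym e B : symmetric e -> symmetric (restrict e B).
Proof. by move=> se u w; rewrite /restrict andbCA se. Qed.

Lemma connected_set1 e (a : T) : connected_set e [set a].
Proof. by move=> u w; rewrite !inE => /eqP-> /eqP->; apply: connect0. Qed.

Lemma connected_set_path e a s : symmetric e -> path e a s ->
  connected_set e [set z in a :: s].
Proof.
move=> se; set B := [set z in a :: s].
have from_head b t : path e b t -> {subset b :: t <= B} ->
    forall z, z \in b :: t -> connect (restrict e B) b z.
  elim: t b => [|c t IH] b /=; first by move=> _ _ z; rewrite inE => /eqP->.
  move=> /andP[ebc ct] tB z; rewrite inE => /orP[/eqP-> //|zt].
  have ctB : {subset c :: t <= B} by move=> u ut; apply: tB; rewrite inE ut orbT.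
  apply: connect_trans (IH c ct ctB z zt); apply: connect1.
  by rewrite /restrict !tB ?ebc // !inE eqxx ?orbT.
move=> pas u w uB wB; have sB : {subset a :: s <= B} by move=> v vs; rewrite /B inE.
rewrite /B !inE in uB wB; apply: connect_trans (from_head _ _ pas sB _ wB).
by rewrite (sym_connect_sym (restrict_sym B se)) (from_head _ _ pas sB).
Qed.

Lemma K4_minor_of_triangle e a b c D : simple_graph e ->
  e a b -> e a c -> e b c -> connected_set e D ->
  a \notin D -> b \notin D -> c \notin D ->
  (exists2 d, d \in D & e a d) -> (exists2 d, d \in D & e b d) ->
  (exists2 d, d \in D & e c d) -> has_K4_minor e.
Proof.
move=> [se ie] eab eac ebc cD aD bD cD' [da Da ead] [db Db ebd] [dc Dc ecd].
have neq u w : e u w -> u != w by apply: contraTneq => ->; rewrite ie.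
pose B i := nth set0 [:: [set a]; [set b]; [set c]; D] i.
have disj : forall i j : 'I_4, i < j -> [disjoint B i & B j].
  by case=> [[|[|[|[|//]]]] ?] [[|[|[|[|//]]]] ?] //= _;
    rewrite disjoints1 ?inE ?neq.
have adj : forall i j : 'I_4, i < j -> exists u w, [/\ u \in B i, w \in B j & e u w].
  case=> [[|[|[|[|//]]]] ?] [[|[|[|[|//]]]] ?] //= _;
    [exists a, b | exists a, c | exists a, da | exists b, c | exists b, db
    | exists c, dc]; by rewrite ?inE ?eqxx.
exists B; split; last split; last split.
- by case=> [[|[|[|[|//]]]] ?]; apply/set0Pn; [exists a|exists b|exists c|exists da];
    rewrite ?inE.
- by case=> [[|[|[|[|//]]]] ?]; rewrite /B /=; try apply: connected_set1.
- move=> i j; rewrite neq_ltn => /orP[/disj //|/disj]; by rewrite disjoint_sym.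
- move=> i j; rewrite neq_ltn => /orP[/adj //|/adj[u [w [uj wi ewu]]]].
  by exists w, u; rewrite se.
Qed.

Lemma K4_minor_of_wheel e x (s : seq T) : simple_graph e ->
  3 <= size s -> uniq s -> cycle e s -> all (e x) s -> has_K4_minor e.
Proof.
move=> [se ie]; case: s => [|v0 [|v1 t]] //; case/lastP: t => [|p w] // _.
rewrite /= rcons_uniq rcons_path last_rcons rcons_path all_rcons.
move=> /and4P[v0n v1n wp _] /and3P[ev0v1 /andP[pv1p epw] ewv0].
move=> /and3P[exv0 exv1 /andP[exw /allP exp]].
have v0D : v0 \notin [set u in v1 :: p].
  by rewrite inE; apply: contra v0n; rewrite !inE mem_rcons inE => /orP[->|->]; rewrite ?orbT.
have wD : w \notin [set u in v1 :: p].
  by rewrite !inE negb_or wp andbT; apply: contra v1n => /eqP<-; rewrite mem_rcons mem_head.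
apply: (@K4_minor_of_triangle e x v0 w [set u in v1 :: p]) => //.
- by rewrite se.
- exact: connected_set_path.
- by rewrite !inE; apply/negP => /orP[/eqP xv1|/exp]; [move: exv1; rewrite xv1|]; rewrite ie.
- by exists v1; rewrite ?inE ?eqxx.
- by exists v1; rewrite ?inE ?eqxx.
- by exists (last v1 p); rewrite ?in_set ?mem_last // se.
Qed.

Lemma exists_maximal_path (r : rel T) (a : T) : exists v s,
  [/\ path r v s, uniq (v :: s), last v s = a & forall w, r w v -> w \in v :: s].
Proof.
suff grow k v s : #|T| - size s <= k -> path r v s -> uniq (v :: s) -> last v s = a ->
    exists v' s', [/\ path r v' s', uniq (v' :: s'), last v' s' = a
                    & forall w, r w v' -> w \in v' :: s'].
  by apply: (grow #|T| a [::]); rewrite ?subn0.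
elim: k v s => [|k IH] v s le_k rvs uvs lvs.
  have lt_s : size (v :: s) <= #|T| by rewrite -(card_uniqP uvs) max_card.
  by move: le_k; rewrite leqn0 subn_eq0 leqNgt lt_s.
have [w /andP[rwv wn]|maximal] := pickP (fun w => r w v && (w \notin v :: s)).
  by apply: (IH w (v :: s)) => /=; rewrite ?rwv ?wn // subnS -subn1 leq_subLR add1n.
by exists v, s; split=> // w rwv; move: (maximal w); rewrite rwv /= => /negbFE.
Qed.

Definition common_neighbours e x y := [set w | e x w & e y w].

(* A maximal path in the neighbourhood of [x], closed up by a second common
   neighbour of its first vertex, is the rim of a wheel centred at [x]. *)
Lemma K4_minor_of_link e x y0 : simple_graph e -> e x y0 ->
  (forall y, e x y -> 1 < #|common_neighbours e x y|) -> has_K4_minor e.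
Proof.
move=> [se ie] exy0 link2.
pose r u w := [&& e x u, e x w & e u w].
have [v [s [rvs uvs lvs maximal]]] := exists_maximal_path r y0.
have exv : e x v by case: (s) rvs lvs => [_ /= ->|? ?] //= /andP[/and3P[]].
have [w1 [w2 []]] := card_gt1P (link2 v exv); rewrite !inE.
move=> /andP[exw1 evw1] /andP[exw2 evw2] w12.
have in_s w : e x w -> e v w -> w \in s.
  move=> exw evw; have := maximal w; rewrite /r exw exv se evw inE => /(_ isT).
  by case/orP=> // /eqP wv; move: evw; rewrite wv ie.
case: s in_s rvs uvs {lvs maximal} => [|v1 s] in_s; first by have := in_s _ exw1 evw1.
have [w [exw evw ws]] : exists w, [/\ e x w, e v w & w \in s].
  case: (eqVneq w1 v1) => [w1v1|w1v1]; [exists w2 | exists w1]; split=> //.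
    by move: (in_s _ exw2 evw2); rewrite inE -w1v1 eq_sym (negbTE w12).
  by move: (in_s _ exw1 evw1); rewrite inE (negbTE w1v1).
case/splitPr: ws => p1 p2; rewrite -cat_rcons -!cat_cons cat_path cat_uniq.
move=> /andP[rp _] /andP[up _].
have rc : cycle r (v :: v1 :: rcons p1 w).
  by rewrite -[cycle _ _]/(path r v (rcons (v1 :: rcons p1 w) v)) rcons_path rp /=
    last_rcons /r exw exv se evw.
apply: (@K4_minor_of_wheel e x (v :: v1 :: rcons p1 w)) => //.
- by rewrite /= size_rcons.
- by apply: sub_cycle rc => u u' /and3P[].
- by apply/allP => u /(next_cycle rc) /and3P[].
Qed.

Definition quotient_graph (pi : T -> T) K e : rel T := fun p q =>
  (p != q) && [exists a, exists b, [&& a \in K, b \in K, pi a == p, pi b == q & e a b]].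

(* Fibres are connected, which makes the quotient graph a minor. *)
Definition contraction_map (pi : T -> T) e :=
  forall a, connect (restrict e (pi @^-1: [set pi a])) a (pi a).

Section QuotientGraph.
Variables (pi : T -> T) (K : {set T}) (e : rel T).
Local Notation e' := (quotient_graph pi K e).

Lemma quotient_graph_simple : symmetric e -> simple_graph e'.
Proof.
move=> se; split=> [p q|p]; last by rewrite /quotient_graph eqxx.
rewrite /quotient_graph eq_sym; congr (_ && _).
by apply/existsP/existsP => -[a /existsP[b /and5P[aK bK pa qb eab]]];
  exists b; apply/existsP; exists a; rewrite aK bK pa qb se.
Qed.

Lemma quotient_graph_edge a b : a \in K -> b \in K -> e a b -> pi a != pi b ->
  e' (pi a) (pi b).
Proof.
move=> aK bK eab nab; rewrite /quotient_graph nab /=.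
by apply/existsP; exists a; apply/existsP; exists b; rewrite aK bK !eqxx eab.
Qed.

Lemma quotient_graph_edge_lift p q : e' p q ->
  exists a b, [/\ a \in K, b \in K, pi a = p, pi b = q & e a b].
Proof.
by case/andP=> _ /existsP[a /existsP[b /and5P[aK bK /eqP pa /eqP qb eab]]];
  exists a, b.
Qed.

Hypotheses (se : symmetric e) (cpi : contraction_map pi e).

Lemma connected_set_preimage B : connected_set e' B -> connected_set e (pi @^-1: B).
Proof.
move=> cB; set A := pi @^-1: B.
have same_fibre a b : a \in A -> pi a = pi b -> connect (restrict e A) a b.
  have to_image u : pi u \in B -> connect (restrict e A) u (pi u).
    move=> uB; apply: connect_sub (cpi u) => v w /and3P[].
    rewrite !inE => /eqP vu /eqP wu evw.
    by apply: connect1; rewrite /restrict !inE vu wu uB evw.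
  rewrite inE => aB ab; apply: connect_trans (to_image a aB) _.
  rewrite (sym_connect_sym (restrict_sym A se)) ab; apply: to_image.
  by rewrite -ab.
move=> a b aA bA; have [aB bB] : pi a \in B /\ pi b \in B by move: aA bA; rewrite !inE.
have lift t p u : u \in A -> pi u = p -> path (restrict e' B) p t ->
    pi b = last p t -> connect (restrict e A) u b.
  elim: t p u => [|q t IH] p u uA pu /=; first by move=> _ bp; apply: same_fibre; rewrite ?pu.
  case/andP=> /and3P[pB qB /quotient_graph_edge_lift[a' [b' [_ _ pa' qb' ea'b']]]] pt lb.
  have a'A : a' \in A by rewrite inE pa'.
  have b'A : b' \in A by rewrite inE qb'.
  apply: connect_trans (same_fibre u a' uA _) _; first by rewrite pu pa'.
  apply: connect_trans (IH q b' b'A qb' pt lb).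
  by apply: connect1; rewrite /restrict a'A b'A ea'b'.
have /connectP[s ps lb] := cB _ _ aB bB.
exact: lift ps lb.
Qed.

Lemma K4_minor_free_quotient : K4_minor_free e -> K4_minor_free e'.
Proof.
move=> kf [B [_ [cB [dB aB]]]]; apply: kf; exists (fun i => pi @^-1: B i).
have adj i j : i != j -> exists a b, [/\ a \in pi @^-1: B i, b \in pi @^-1: B j & e a b].
  case/aB=> p [q [pB qB /quotient_graph_edge_lift[a [b [_ _ pa qb eab]]]]].
  by exists a, b; rewrite !inE pa qb.
split; last split; last split => //.
- move=> i; have [j ij] : exists j, i != j.
    by case: (eqVneq i ord0) => [->|]; [exists ord_max | exists ord0].
  by have [a [_ [ai _ _]]] := adj i j ij; apply/set0Pn; exists a.
- by move=> i; apply: connected_set_preimage.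
- move=> i j /dB; rewrite -!setI_eq0 -preimsetI => /eqP->.
  by rewrite preimset0.
Qed.

End QuotientGraph.

Definition degree e v := #|[set w | e v w]|.
Definition nonisolated e := [set v | 0 < degree e v].
Definition degree_sum e := \sum_v degree e v.

Lemma nonisolatedP e v : reflect (exists w, e v w) (v \in nonisolated e).
Proof.
rewrite inE /degree; apply: (iffP card_gt0P) => [[w]|[w ew]]; last by exists w; rewrite inE.
by rewrite inE; exists w.
Qed.

Lemma degree_sum_ge e k : (forall v, v \in nonisolated e -> k <= degree e v) ->
  #|nonisolated e| * k <= degree_sum e.
Proof.
move=> ge_k; rewrite -sum_nat_const big_mkcond; apply: leq_sum => v _.
by case: ifP => // /ge_k.
Qed.

Lemma card_nonisolated_quotient pi K e v : v \in nonisolated e ->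
  (forall a, a \in K -> a \in nonisolated e -> pi a \in nonisolated e :\ v) ->
  #|nonisolated (quotient_graph pi K e)| < #|nonisolated e|.
Proof.
move=> vN piN; rewrite (cardsD1 v (nonisolated e)) vN add1n ltnS; apply: subset_leq_card.
apply/subsetP => p /nonisolatedP[q /quotient_graph_edge_lift[a [b [aK _ <- _ eab]]]].
by apply: piN aK _; apply/nonisolatedP; exists b.
Qed.

Definition contract (x y a : T) := if a == x then y else a.

Section EdgeContraction.
Variables (e : rel T) (x y : T).
Hypotheses (ge : simple_graph e) (exy : e x y).
Local Notation e' := (quotient_graph (contract x y) setT e).

Let se : symmetric e := proj1 ge.
Let ie : irreflexive e := proj2 ge.
Local Notation C := (common_neighbours e x y).

Let neq_xy : x != y.
Proof. by apply: contraTneq exy => ->; rewrite ie. Qed.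

Let contract_id a : a != x -> contract x y a = a.
Proof. by rewrite /contract => /negbTE->. Qed.

Let contract_x : contract x y x = y.
Proof. by rewrite /contract eqxx. Qed.

Let contract_y : contract x y y = y.
Proof. by rewrite contract_id // eq_sym. Qed.

Let contract_edge a b : e a b -> contract x y a != contract x y b ->
  e' (contract x y a) (contract x y b).
Proof. exact: quotient_graph_edge. Qed.

Lemma contraction_map_contract : contraction_map (contract x y) e.
Proof.
move=> a; case: (eqVneq a x) => [->|ax]; last by rewrite contract_id.
by apply: connect1; rewrite /restrict !inE contract_x contract_y eqxx exy.
Qed.

Lemma degree_contract v : v != x -> v != y -> degree e v <= degree e' v + (v \in C).
Proof.
move=> vx vy; rewrite /degree.
have e'v w : e v w -> w != x -> e' v w.
  move=> evw wx; have := contract_edge evw; rewrite !contract_id //; apply.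
  by apply: contraTneq evw => ->; rewrite ie.
case: (boolP (e v x)) => evx; last first.
  apply: leq_trans (leq_addr _ _); apply: subset_leq_card; apply/subsetP => w.
  by rewrite !inE => evw; apply: e'v => //; apply: (contraNneq _ evx) => <-.
case: (boolP (e v y)) => evy.
  have -> : v \in C by rewrite inE -!(se v) evx evy.
  rewrite (cardsD1 x) inE evx add1n addn1 ltnS; apply: subset_leq_card; apply/subsetP => w.
  by rewrite !inE => /andP[wx evw]; apply: e'v.
have -> : #|[set w | e v w]| = #|y |: ([set w | e v w] :\ x)|.
  by rewrite cardsU1 [in LHS](cardsD1 x) !inE evx (negbTE evy) andbF.
apply: leq_trans (leq_addr _ _); apply: subset_leq_card; apply/subsetP => w.
rewrite !inE => /orP[/eqP->|/andP[wx evw]]; last exact: e'v.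
by have := contract_edge evx; rewrite contract_x contract_id //; apply.
Qed.

Lemma degree_contract_ends : degree e x + degree e y <= degree e' y + #|C| + 2.
Proof.
rewrite /degree; set A := [set w | e x w] :|: [set w | e y w].
have sub : A :\: [set x; y] \subset [set w | e' y w].
  apply/subsetP => w; rewrite !inE negb_or => /andP[/andP[wx wy] /orP[exw|eyw]].
    by have := contract_edge exw; rewrite contract_x contract_id //; apply; rewrite eq_sym.
  by have := contract_edge eyw; rewrite contract_y contract_id //; apply; rewrite eq_sym.
have cA : #|A :\: [set x; y]| = #|A| - 2.
  rewrite cardsD (setIidPr _) ?cards2 ?neq_xy //.
  by apply/subsetP => w; rewrite !inE => /orP[]/eqP->; rewrite ?(se y x) ?exy ?orbT.
have := cardsUI [set w | e x w] [set w | e y w].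
have -> : [set w | e x w] :&: [set w | e y w] = C by apply/setP => w; rewrite !inE.
have := subset_leq_card sub; rewrite cA -/A; lia.
Qed.

(* The edge xy disappears, and for each common neighbour w so does one of xw, yw. *)
Lemma degree_sum_contract : degree_sum e <= degree_sum e' + 2 * #|C| + 2.
Proof.
have pointwise v : degree e v + (v == y) * degree e' y <= degree e' v + (v \in C)
                     + (v == x) * degree e x + (v == y) * degree e y.
  case: (eqVneq v x) => [->|vx]; first by rewrite (negbTE neq_xy) mul1n mul0n; lia.
  case: (eqVneq v y) => [->|vy]; first by rewrite mul1n mul0n; lia.
  by rewrite !mul0n !addn0; apply: degree_contract.
have sum_C : \sum_v (v \in C : nat) = #|C|.
  by rewrite -sum1_card [RHS]big_mkcond; apply: eq_bigr => v _; case: (v \in C).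
have sum_at u k : \sum_v ((v == u) * k) = k.
  by rewrite (bigD1 u) //= eqxx mul1n big1 ?addn0 // => v /negbTE->.
have := leq_sum (index_enum T) (P := xpredT) (fun v _ => pointwise v).
rewrite !big_split /= sum_C !sum_at -/(degree_sum e) -/(degree_sum e').
by have := degree_contract_ends; lia.
Qed.

Lemma card_nonisolated_contract : #|nonisolated e'| < #|nonisolated e|.
Proof.
apply: card_nonisolated_quotient (x) _ _ => [|a _ aN]; first by apply/nonisolatedP; exists y.
rewrite in_setD1 /contract; case: ifP => [_|/negbT -> //].
by rewrite eq_sym neq_xy; apply/nonisolatedP; exists x; rewrite se.
Qed.

Lemma card_common_neighbours : #|C| + 2 <= #|nonisolated e|.
Proof.
have xC : x \notin C by rewrite inE ie.
have yC : y \notin C by rewrite inE ie andbF.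
have <- : #|x |: (y |: C)| = #|C| + 2.
  by rewrite !cardsU1 yC in_setU1 negb_or neq_xy xC /=; lia.
apply: subset_leq_card; apply/subsetP => w.
rewrite !in_setU1 inE => /or3P[/eqP->|/eqP->|/andP[exw _]]; apply/nonisolatedP.
- by exists y.
- by exists x; rewrite se.
- by exists x; rewrite se.
Qed.

End EdgeContraction.

(* [|E| <= 2|V| - 3] over the non-isolated vertices; subtraction is truncated,
   so for an edgeless graph it reads [0 <= 0]. *)
Lemma degree_sum_le e : simple_graph e -> K4_minor_free e ->
  degree_sum e <= 4 * #|nonisolated e| - 6.
Proof.
move=> ge kf; have [n] := ubnP #|nonisolated e|.
elim: n e ge kf => // n IH e ge kf /ltnSE le_n.
have [[v w] /= evw|no_edge] := pickP (fun vw : T * T => e vw.1 vw.2); last first.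
  rewrite /degree_sum big1 // => v _; apply/eqP; rewrite cards_eq0; apply/eqP/setP => w.
  by rewrite !inE (no_edge (v, w)).
have [y /andP[evy small]|large] :=
  pickP (fun y => e v y && (#|common_neighbours e v y| <= 1)); last first.
  case: kf; apply: (K4_minor_of_link ge evw) => y evy.
  by move: (large y); rewrite evy /= ltnNge => ->.
have := degree_sum_contract ge evy; have := card_common_neighbours ge evy.
have lt_N := card_nonisolated_contract ge evy.
have := IH _ (quotient_graph_simple _ _ ge.1)
  (K4_minor_free_quotient ge.1 (contraction_map_contract ge evy) kf) (leq_trans lt_N le_n).
lia.
Qed.

Definition three_colorable e := exists c : T -> 'I_3, proper_coloring e c.

Lemma three_colorable_extend e v (pi : T -> T) : simple_graph e ->
  (forall a b, a != v -> b != v -> e a b -> pi a != pi b) ->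
  #|pi @: [set w | e v w]| <= 2 ->
  three_colorable (quotient_graph pi (setT :\ v) e) -> three_colorable e.
Proof.
move=> [se ie] pi_edge small [c' pc'].
set used := c' @: (pi @: [set w | e v w]).
have [k k_free] : exists k, k \notin used.
  have := cardsC used; have := leq_trans (leq_imset_card c' _) small.
  rewrite card_ord -/used => le_used card_used; have : 0 < #|~: used| by lia.
  by case/card_gt0P => k; rewrite inE; exists k.
have k_new w : e v w -> k != c' (pi w).
  by move=> evw; apply: contraNneq k_free => ->; do 2!apply: imset_f; rewrite inE.
exists (fun a => if a == v then k else c' (pi a)) => a b eab.
case: (eqVneq a v) => [av|av]; case: (eqVneq b v) => [bv|bv].
- by move: eab; rewrite av bv ie.
- by apply: k_new; rewrite -av.
- by rewrite eq_sym; apply: k_new; rewrite -bv se.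
- apply/pc'/quotient_graph_edge; rewrite ?in_setD1 ?in_setT ?av ?bv //.
  exact: pi_edge.
Qed.

Section ColoringReduction.
Variable e : rel T.
Hypotheses (ge : simple_graph e) (kf : K4_minor_free e).
Hypothesis IH : forall e', simple_graph e' -> K4_minor_free e' ->
  #|nonisolated e'| < #|nonisolated e| -> three_colorable e'.

Lemma three_colorable_reduce v (pi : T -> T) :
  contraction_map pi e -> v \in nonisolated e ->
  (forall a, a != v -> a \in nonisolated e -> pi a \in nonisolated e :\ v) ->
  (forall a b, a != v -> b != v -> e a b -> pi a != pi b) ->
  #|pi @: [set w | e v w]| <= 2 -> three_colorable e.
Proof.
move=> cpi vN piN pi_edge small; apply: three_colorable_extend ge pi_edge small _.
apply: IH; first exact: quotient_graph_simple ge.1.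
  exact: K4_minor_free_quotient ge.1 cpi kf.
by apply: card_nonisolated_quotient vN _ => a; rewrite in_setD1 => /andP[av _]; apply: piN.
Qed.

Lemma three_colorable_low_degree v : 0 < degree e v <= 2 -> three_colorable e.
Proof.
case/andP=> d_gt0 d_le2; apply: (@three_colorable_reduce v id).
- by move=> a; apply: connect0.
- by rewrite inE.
- by move=> a av aN; rewrite in_setD1 av.
- by move=> a b _ _; apply: contraTneq => ->; rewrite ge.2.
- by rewrite imset_id.
Qed.

(* Contract the path [b u c] onto [c] and delete [u]: [b] and [c] then share a
   colour, leaving a free colour for [u]. *)
Lemma three_colorable_degree3 u b c : degree e u = 3 ->
  e u b -> e u c -> b != c -> ~~ e b c -> three_colorable e.
Proof.
move=> du eub euc bc nbc; have [se ie] := ge.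
have neq p q : e p q -> p != q by apply: contraTneq => ->; rewrite ie.
pose pi a := if (a == b) || (a == u) then c else a.
have pi_b : pi b = c by rewrite /pi eqxx.
have pi_u : pi u = c by rewrite /pi eqxx orbT.
have pi_c : pi c = c by rewrite /pi eq_sym (negbTE bc) eq_sym (negbTE (neq _ _ euc)).
have pi_out a : a != b -> a != u -> pi a = a by rewrite /pi => /negbTE-> /negbTE->.
apply: (@three_colorable_reduce u pi).
- move=> a; rewrite /restrict; case: (eqVneq a b) => [->|ab].
    rewrite pi_b; apply: (@connect_trans _ _ u); apply: connect1;
      by rewrite !inE ?pi_b ?pi_u ?pi_c ?eqxx ?euc // se.
  case: (eqVneq a u) => [->|au]; last by rewrite pi_out.
  by rewrite pi_u; apply: connect1; rewrite !inE pi_u pi_c eqxx euc.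
- by apply/nonisolatedP; exists b.
- move=> a au aN; rewrite /pi (negbTE au) orbF in_setD1.
  case: ifP => _; last by rewrite au.
  by rewrite eq_sym neq //; apply/nonisolatedP; exists u; rewrite se.
- move=> a a' au a'u eaa'; rewrite /pi (negbTE au) (negbTE a'u) !orbF.
  case: (eqVneq a b) eaa' => [->|ab]; case: (eqVneq a' b) => [->|a'b] //.
  + by rewrite ie.
  + by move=> eba'; apply: contraNneq nbc => ->.
  + by move=> eab'; apply: contraNneq nbc => <-; rewrite se.
  + exact: neq.
- have sub : pi @: [set w | e u w] \subset pi @: ([set w | e u w] :\ b).
    apply/subsetP => _ /imsetP[w wN ->]; case: (eqVneq w b) => [->|wb].
      by rewrite pi_b -{1}pi_c; apply: imset_f; rewrite !inE eq_sym bc euc.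
    by apply: imset_f; rewrite !inE wb; rewrite inE in wN.
  apply: leq_trans (subset_leq_card sub) (leq_trans (leq_imset_card _ _) _).
  by move: du; rewrite /degree (cardsD1 b) inE eub add1n => -[->].
Qed.

End ColoringReduction.

Lemma degree3_nonadjacent_neighbours e v : simple_graph e -> K4_minor_free e ->
  degree e v = 3 -> exists b c, [/\ e v b, e v c, b != c & ~~ e b c].
Proof.
move=> ge kf dv; have : 2 < #|[set w | e v w]| by rewrite -/(degree e v) dv.
case/card_gt2P=> b1 [b2 [b3 [[]]]]; rewrite !inE => e1 e2 e3 [n12 n23 n31].
have [e12|] := boolP (e b1 b2); last by exists b1, b2.
have [e23|] := boolP (e b2 b3); last by exists b2, b3.
have [e31|] := boolP (e b3 b1); last by exists b3, b1.
case: kf; apply: (@K4_minor_of_triangle e b1 b2 b3 [set v]) => //.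
- by rewrite ge.1.
- exact: connected_set1.
all: have nv w : e v w -> w \notin [set v] by rewrite inE; apply: contraTneq => ->; rewrite ge.2.
all: try exact: nv.
all: by exists v; [rewrite inE | rewrite ge.1].
Qed.

Theorem K4_minor_free_three_colorable e : simple_graph e -> K4_minor_free e ->
  three_colorable e.
Proof.
move=> ge kf; have [n] := ubnP #|nonisolated e|.
elim: n e ge kf => // n IHn e ge kf /ltnSE le_n.
have IH e' : simple_graph e' -> K4_minor_free e' ->
    #|nonisolated e'| < #|nonisolated e| -> three_colorable e'.
  by move=> ge' kf' lt_e'; apply: IHn => //; apply: leq_trans lt_e' le_n.
have [v /andP[d_gt0 d_le3]|high] := pickP (fun v => 0 < degree e v <= 3).
  case: (leqP (degree e v) 2) => [d_le2|d_gt2].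
    by apply: (three_colorable_low_degree ge kf IH (v := v)); rewrite d_gt0.
  have d3 : degree e v = 3 by apply/eqP; rewrite eqn_leq d_le3.
  have [b [c [evb evc bc nbc]]] := degree3_nonadjacent_neighbours ge kf d3.
  exact: (three_colorable_degree3 ge kf IH d3 evb evc bc nbc).
have deg4 v : v \in nonisolated e -> 4 <= degree e v.
  by rewrite inE => d_gt0; move: (high v) => /=; rewrite d_gt0 /= ltnNge => ->.
have := degree_sum_ge deg4; have := degree_sum_le ge kf => le_sum ge_sum.
have : #|nonisolated e| == 0 by rewrite -leqn0; lia.
rewrite cards_eq0 => /eqP N0; exists (fun=> ord0) => a b eab.
suff : a \in nonisolated e by rewrite N0 inE.
by apply/nonisolatedP; exists b.
Qed.

End K4MinorFree.

Lemma card_set3 (T : finType) (a b d : T) :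
  #|[set a; b; d]| = (a \notin [set b; d]) + (b != d).+1.
Proof. by rewrite -setUA cardsU1 cards2. Qed.

Lemma ord3_pigeonhole (a a' b d : 'I_3) :
  a != a' -> b != d -> (a \in [set b; d]) || (a' \in [set b; d]).
Proof. by rewrite !inE; move: a a' b d; do 4! case=> [[|[|[|//]]] ?]. Qed.

Section Feasibility.
Variables (T : finType) (e : rel T) (c : T -> 'I_3).
Hypothesis pc : proper_coloring e c.

Lemma diamond_color_eq u v w u' : e u v -> e u w -> e v w -> e v u' -> e w u' ->
  c u = c u'.
Proof.
move=> /pc uv /pc uw /pc vw /pc vu' /pc wu'.
move: (c u) (c v) (c w) (c u') uv uw vw vu' wu'.
by do 4! case=> [[|[|[|//]]] ?]; move=> *; apply/val_inj.
Qed.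

Lemma chain_of_diamonds_monochromatic X : connected_by_chain_of_diamonds e X ->
  exists k, {in X, forall t, c t = k}.
Proof.
move=> [n [u [v [w [hom cov]]]]]; exists (c (u 0)) => _ /cov[i le_i_n <-].
elim: i le_i_n => // i IH lt_i_n; rewrite -IH; last exact: ltnW.
have [e1 e2 e3 e4 e5] := hom i.+1 lt_i_n.
by symmetry; apply: (diamond_color_eq e1 e2 e3 e4 e5).
Qed.

Lemma feasible_of_two_colors (X : {set T}) : #|X| = 3 -> #|c @: X| = 2 -> feasible e X.
Proof.
move=> X3 cX2; split=> //; last by exists c; rewrite cX2.
case/chain_of_diamonds_monochromatic=> k ck.
have : c @: X \subset [set k] by apply/subsetP => _ /imsetP[t tX ->]; rewrite ck ?inE.
by move/subset_leq_card; rewrite cX2 cards1.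
Qed.

End Feasibility.

Theorem mainTheorem9 (T : finType) (e : rel T) (x x' y z : T) :
  simple_graph e -> K4_minor_free e -> e x x' ->
  y != z -> y \notin [set x; x'] -> z \notin [set x; x'] ->
  feasible e [set x; y; z] \/ feasible e [set x'; y; z].
Proof.
move=> ge kf exx' yz yN zN.
have [c pc] := K4_minor_free_three_colorable ge kf.
have cxx' : c x != c x' := pc x x' exx'.
have feasible_at p : p \in [set x; x'] -> #|[set c p; c y; c z]| = 2 ->
    feasible e [set p; y; z].
  move=> pN two; apply: (feasible_of_two_colors pc).
    rewrite card_set3 yz !inE negb_or.
    by rewrite (contraNneq _ yN) ?(contraNneq _ zN) // => <-.
  by rewrite !imsetU !imset_set1.
have [cyz|cyz] := eqVneq (c y) (c z).
  have [cxy|cxy] := eqVneq (c x) (c y).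
    right; apply: feasible_at; first by rewrite !inE eqxx orbT.
    by rewrite card_set3 -cyz !inE orbb -cxy eq_sym cxx' eqxx.
  left; apply: feasible_at; first by rewrite !inE eqxx.
  by rewrite card_set3 -cyz !inE orbb cxy eqxx.
by case/orP: (ord3_pigeonhole cxx' cyz) => c_in; [left|right];
  apply: feasible_at; rewrite ?card_set3 ?c_in ?cyz // !inE eqxx ?orbT.
Qed.
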